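(* Let $p$ be a prime. The only $p$-archimedean divisibility $|$ on the field $\mathbb{Q}$ with $p\nmid1$ is the one given by the $p$-adic valuation: $a|b\Leftrightarrow v_p(a)\le v_p(b)$.
   Context: A divisibility on a commutative ring $A$ with $1\neq0$ is a binary relation $|\subseteq A\times A$ such that for all $a,b,c$: (1) $a|a$; (2) $a|b,\ b|c\Rightarrow a|c$; (3) $a|b,\ a|c\Rightarrow a|b-c$; (4) $a|b\Rightarrow ac|bc$; (5) $0\nmid1$. A divisibility on $\mathbb{Q}$ is $p$-archimedean if for every $a\in\mathbb{Q}$ there is $m\in\mathbb{Z}$ with $p^m|a$. *)

From mathcomp Require Import all_boot all_order all_algebra.
Set Implicit Arguments. Unset Strict Implicit. Unset Printing Implicit Defensive.
Import Order.TTheory GRing.Theory Num.Theory.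
Local Open Scope ring_scope.

Definition is_divisibility (A : comNzRingType) (dv : A -> A -> Prop) : Prop :=
  [/\ (forall a, dv a a),
      (forall a b c, dv a b -> dv b c -> dv a c),
      (forall a b c, dv a b -> dv a c -> dv a (b - c)),
      (forall a b c, dv a b -> dv (a * c) (b * c)) &
      ~ dv 0 1].

Definition p_archimedean (p : nat) (dv : rat -> rat -> Prop) : Prop :=
  forall a : rat, exists m : int, dv ((p%:R : rat) ^ m) a.

Definition vp (p : nat) (a : rat) : int :=
  (logn p `|numq a|%N)%:Z - (logn p `|denq a|%N)%:Z.

(* v_p(a) <= v_p(b) with the convention v_p(0) = +oo. *)
Definition vp_le (p : nat) (a b : rat) : Prop :=
  b = 0 \/ (a != 0 /\ vp p a <= vp p b).

From mathcomp Require Import all_boot all_order all_algebra.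
From mathcomp Require Import zify ring.
Set Implicit Arguments. Unset Strict Implicit. Unset Printing Implicit Defensive.
Import Order.TTheory GRing.Theory Num.Theory.
Local Open Scope ring_scope.

(* The elements x with [dv 1 x] form a subring of Q containing Z.  It contains
   [d^-1] for every d prime to p: the p-archimedean property makes [p^k / d]
   a dv-integer for some k, and a Bezout relation [u p^k + v d = 1] then
   writes [1/d] as a dv-integer combination of [p^k / d] and 1.  It cannot
   contain [p^-1], since that would give [dv p 1].  Hence for x <> 0 we get
   [dv 1 x] iff p does not divide the denominator of x, i.e. iff v_p(x) >= 0,
   and [dv a b] reduces to [dv 1 (b / a)]. *)

Lemma vp_frac p (n d : int) : n != 0 -> d != 0 ->
  vp p (n%:~R / d%:~R) = (logn p `|n|)%:Z - (logn p `|d|)%:Z.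
Proof.
move=> n0 d0; rewrite /vp; set x := _ / _.
have x0 : x != 0 by rewrite /x mulf_neq0 ?invr_eq0 ?intr_eq0.
have cross : n * denq x = numq x * d.
  apply/eqP; rewrite -(eqr_int rat) !intrM -eqr_div ?intr_eq0 ?denq_neq0 //.
  by rewrite divq_num_den.
have := congr1 (fun z => logn p `|z|) cross.
rewrite /= !abszM !lognM ?absz_gt0 ?denq_neq0 ?numq_eq0 //; lia.
Qed.

Lemma vpM p a b : a != 0 -> b != 0 -> vp p (a * b) = vp p a + vp p b.
Proof.
move=> a0 b0.
have -> : a * b = (numq a * numq b)%:~R / (denq a * denq b)%:~R.
  by rewrite !intrM invfM mulrACA !divq_num_den.
rewrite vp_frac ?mulf_neq0 ?numq_eq0 ?denq_neq0 // /vp.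
rewrite !abszM !lognM ?absz_gt0 ?numq_eq0 ?denq_neq0 //; lia.
Qed.

Lemma vpV p a : a != 0 -> vp p a^-1 = - vp p a.
Proof.
move=> a0; have -> : a^-1 = (denq a)%:~R / (numq a)%:~R.
  by rewrite -{1}(divq_num_den a) invf_div.
rewrite vp_frac ?numq_eq0 ?denq_neq0 // /vp; lia.
Qed.

Lemma vp_div p a b : a != 0 -> b != 0 -> vp p (b / a) = vp p b - vp p a.
Proof. by move=> a0 b0; rewrite vpM ?invr_eq0 // vpV. Qed.

Lemma vp_ge0 p x : prime p -> x != 0 ->
  (0 <= vp p x) = ~~ (p %| `|denq x|)%N.
Proof.
move=> p_pr x0; rewrite /vp subr_ge0 lez_nat.
have [p_den|p_den] := boolP (p %| `|denq x|)%N; last first.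
  by rewrite logn_coprime // prime_coprime.
have p_num : ~~ (p %| `|numq x|)%N.
  apply: contraL p_den => p_num.
  by rewrite -prime_coprime // (coprime_dvdl p_num) ?coprime_num_den.
rewrite (@logn_coprime p `|numq x|) ?prime_coprime // leqn0; apply/negbTE.
by rewrite -lt0n logn_gt0 mem_primes p_pr absz_gt0 denq_neq0 p_den.
Qed.

Section Divisibility.
Variables (R : comNzRingType) (dv : R -> R -> Prop).
Hypothesis dvP : is_divisibility dv.

Lemma dv_refl a : dv a a. Proof. by case: dvP. Qed.

Lemma dv_trans a b c : dv a b -> dv b c -> dv a c.
Proof. by case: dvP => _ trans _ _ _; apply: trans. Qed.

Lemma dvB a b c : dv a b -> dv a c -> dv a (b - c).
Proof. by case: dvP => _ _ sub _ _; apply: sub. Qed.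

Lemma dvMr a b c : dv a b -> dv (a * c) (b * c).
Proof. by case: dvP => _ _ _ mul _; apply: mul. Qed.

Lemma dv_n01 : ~ dv 0 1. Proof. by case: dvP. Qed.

Lemma dv0 a : dv a 0.
Proof. by rewrite -(subrr a); apply: dvB; apply: dv_refl. Qed.

Lemma dvN a b : dv a b -> dv a (- b).
Proof. by move=> ab; rewrite -sub0r; apply: dvB => //; apply: dv0. Qed.

Lemma dvD a b c : dv a b -> dv a c -> dv a (b + c).
Proof. by move=> ab ac; rewrite -(opprK c); apply: dvB => //; apply: dvN. Qed.

Lemma dv1n (n : nat) : dv 1 n%:R.
Proof.
elim: n => [|n IHn]; first exact: dv0.
by rewrite -addn1 natrD; apply: dvD => //; apply: dv_refl.
Qed.

Lemma dv1z (z : int) : dv 1 z%:~R.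
Proof. by case: z => n; rewrite ?NegzE ?mulrNz; [|apply: dvN]; apply: dv1n. Qed.

Lemma dv1M x y : dv 1 x -> dv 1 y -> dv 1 (x * y).
Proof. by move=> x1 y1; apply: dv_trans y1 _; rewrite -{1}[y]mul1r; apply: dvMr. Qed.

End Divisibility.

Section FieldDivisibility.
Variables (F : fieldType) (dv : F -> F -> Prop).
Hypothesis dvP : is_divisibility dv.

Lemma dv_neq0 a b : dv a b -> b != 0 -> a != 0.
Proof.
move=> ab b0; apply/eqP => a0; apply: (dv_n01 dvP).
by have := dvMr dvP b^-1 ab; rewrite a0 mul0r divff.
Qed.

Lemma dv_div1 a b : a != 0 -> dv a b <-> dv 1 (b / a).
Proof.
move=> a0; split=> [ab | ba1].
  by have := dvMr dvP a^-1 ab; rewrite divff.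
by have := dvMr dvP a ba1; rewrite mul1r divfK.
Qed.

End FieldDivisibility.

Section PAdicDivisibility.
Variables (dv : rat -> rat -> Prop) (p : nat).
Hypotheses (dvP : is_divisibility dv) (p_pr : prime p).
Hypotheses (dv_arch : p_archimedean p dv) (p_ndv1 : ~ dv p%:R 1).

Lemma dv1_natV d : ~~ (p %| d)%N -> dv 1 d%:R^-1.
Proof.
move=> p_d; have d0 : d%:R != 0 :> rat.
  by rewrite pnatr_eq0; apply: contraNneq p_d => ->.
have p0 : p%:R != 0 :> rat by rewrite pnatr_eq0 -lt0n prime_gt0.
have [[k|k] pk_d] := dv_arch d%:R^-1.
  by apply: (dv_trans dvP _ pk_d); rewrite /exprz -natrX; apply: dv1n.
have pk1_d : dv 1 (p%:R ^+ k.+1 / d%:R).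
  have := dvMr dvP (p%:R ^+ k.+1) pk_d.
  by rewrite /exprz mulVf ?expf_neq0 // mulrC.
have coprime_pk_d : coprime (p ^ k.+1) d by rewrite coprimeXl ?prime_coprime.
have [u [v]] := Bezoutz (p ^ k.+1)%:Z d%:Z; rewrite /gcdz /= (eqP coprime_pk_d).
move=> /(congr1 (fun z : int => z%:~R : rat)).
rewrite rmorphD !rmorphM /= -!pmulrn natrX mulr1n => bezout.
have -> : d%:R^-1 = u%:~R * (p%:R ^+ k.+1 / d%:R) + v%:~R :> rat.
  by apply: (mulIf d0); rewrite mulVf // mulrDl -!mulrA mulVf // mulr1 bezout.
by apply: (dvD dvP); [apply: (dv1M dvP) pk1_d |]; apply: dv1z.
Qed.

Lemma dv1_intV (n : int) : ~~ (p %| `|n|)%N -> dv 1 n%:~R^-1.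
Proof.
case: n => n /= p_n; first exact: dv1_natV.
by rewrite NegzE mulrNz invrN; apply: (dvN dvP); apply: dv1_natV.
Qed.

Lemma dv1_vp x : x != 0 -> dv 1 x <-> 0 <= vp p x.
Proof.
move=> x0; rewrite vp_ge0 //.
have xE : x = (numq x)%:~R / (`|denq x|%N)%:R.
  by rewrite [in RHS]pmulrn absz_denq divq_num_den.
split=> [x1 | p_den]; last first.
  by rewrite xE; apply: (dv1M dvP); [apply: dv1z | apply: dv1_natV].
apply/negP => /dvdnP[q den_qp]; apply: p_ndv1.
have p0 : p%:R != 0 :> rat by rewrite pnatr_eq0 -lt0n prime_gt0.
have q0 : q%:R != 0 :> rat.
  rewrite pnatr_eq0; apply: contraTneq (denq_neq0 x) => q0.
  by rewrite -absz_eq0 den_qp q0.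
have p_num : ~~ (p %| `|numq x|)%N.
  apply/negP => p_num; have := coprime_dvdl p_num (coprime_num_den x).
  by rewrite den_qp coprimeMr [coprime p p]prime_coprime // dvdnn andbF.
have num0 : (numq x)%:~R != 0 :> rat by rewrite intr_eq0 numq_eq0.
(* x = n / (q p), so p^-1 = x * q * n^-1 *)
have pV : dv 1 (p%:R^-1).
  have := dv1M dvP (dv1M dvP x1 (dv1n dvP q)) (dv1_intV p_num).
  by rewrite {1}xE den_qp natrM; congr dv; field; rewrite p0 q0 num0.
by have := dvMr dvP p%:R pV; rewrite mul1r mulVf.
Qed.

Lemma dv_vp a b : a != 0 -> b != 0 -> dv a b <-> vp p a <= vp p b.
Proof.
move=> a0 b0; rewrite -subr_ge0 -vp_div // -dv1_vp ?mulf_neq0 ?invr_eq0 //.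
exact: dv_div1.
Qed.

End PAdicDivisibility.

Theorem proposition4p3 (p : nat) (dv : rat -> rat -> Prop) :
  prime p -> is_divisibility dv -> p_archimedean p dv -> ~ dv (p%:R) 1 ->
  forall a b : rat, dv a b <-> vp_le p a b.
Proof.
move=> p_pr dvP dv_arch p_ndv1 a b; rewrite /vp_le.
have [->|b0] := eqVneq b 0; first by split=> _; [left | apply: dv0].
have dv_vp_ab := dv_vp dvP p_pr dv_arch p_ndv1 (a := a) (b := b).
split=> [ab | [b_eq0 | [a0 le_ab]]].
- have a0 := dv_neq0 dvP ab b0.
  by right; split; last apply/dv_vp_ab.
- by rewrite b_eq0 eqxx in b0.
- exact/dv_vp_ab.
Qed.
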